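(* Let $F$ be a field of characteristic zero. Fix integers $d,\tau\ge0$ and let $\{\beta_i\}_{i\ge\tau}\subseteq F$ satisfy $$\beta_s\beta_t=(\beta_s+\beta_t)\beta_{s+t+d}\quad\text{for all } s,t\ge\tau.$$ Then either $\beta_i=0$ for all $i\ge\tau$, or there exist integers $k$ and $\Delta$ with $\beta_k\ne0$, $0\le k-\tau<\Delta\le k+d$ and $\Delta\mid k+d$, such that for all $t\ge\tau$ $$\beta_t=\begin{cases}\dfrac{(k+d)\beta_k}{k+d+\Delta s}, & t=k+\Delta s,\ s\ge0,\\ 0,&\text{otherwise}.\end{cases}$$ In particular, if $d=\tau=0$, then $\beta_i=0$ for all $i\ge0$. *)

From mathcomp Require Import all_boot all_algebra.
Set Implicit Arguments.
Unset Strict Implicit.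
Unset Printing Implicit Defensive.

(* Put g_a = beta_(a-d). For a, b >= tau + d the hypothesis reads
   g_a g_b = (g_a + g_b) g_(a+b), i.e. 1/g is additive where g does not vanish.
   Hence the support A of g is closed under addition, and a, a + b in A forces
   b in A (b >= tau + d), since otherwise g_a g_(a+b) = 0.  Such a set is an
   arithmetic progression m + Delta N with Delta | m, where m < m + Delta are its
   two least elements.  Induction on n gives n g_(na) = g_a, so a g_a is
   constant on A, which in characteristic zero is the announced formula. *)

From mathcomp Require Import all_boot all_algebra.
From mathcomp Require Import zify ring.
From Stdlib Require Import Classical.

Set Implicit Arguments.
Unset Strict Implicit.
Unset Printing Implicit Defensive.
Import GRing.Theory.
Local Open Scope ring_scope.

Section AddClosedSet.

Variables (P : pred nat) (c : nat).
Hypothesis P_ge : forall a, P a -> (c <= a)%N.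
Hypothesis P_gt0 : forall a, P a -> (0 < a)%N.
Hypothesis P_add : forall a b, P a -> P b -> P (a + b)%N.
Hypothesis P_sub : forall a b, P a -> P (a + b)%N -> (c <= b)%N -> P b.

Lemma progression_sub_add_closed m D :
  P m -> P (m + D)%N -> forall j, P (m + j * D)%N.
Proof.
move=> Pm PmD; elim=> [|j IH]; first by rewrite addn0.
apply: (P_sub Pm); last by have := P_ge Pm; lia.
by have := P_add IH PmD; congr P; rewrite mulSn; lia.
Qed.

Lemma add_closed_sub_progression m D : (0 < D)%N ->
  (forall x, P x -> m <= x)%N -> (forall x, P x -> m < x -> m + D <= x)%N ->
  P m -> P (m + D)%N -> forall x, P x -> (m <= x)%N && (D %| x - m)%N.
Proof.
move=> D_gt0 m_min mD_min Pm PmD; elim/ltn_ind=> x IH Px.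
rewrite m_min //=; case: (ltngtP m x) (m_min x Px) => // [ltmx _|<- _]; last first.
  by rewrite subnn dvdn0.
case: (ltngtP (m + D) x) (mD_min x Px ltmx) => // [ltmDx _|<- _]; last first.
  by rewrite addKn dvdnn.
have PxD : P (x - D)%N.
  apply: (P_sub PmD); last by have := P_ge Pm; lia.
  by have := P_add Px Pm; congr P; lia.
have /andP[_ dvd_xDm] := IH (x - D)%N ltac:(lia) PxD.
have -> : (x - m = (x - D - m) + D)%N by lia.
by rewrite dvdn_add.
Qed.

Lemma add_closed_eq_progression : (exists a, P a) ->
  exists m D, [/\ (0 < D)%N, (D %| m)%N, (m - c < D)%N &
                 forall x, P x = (m <= x)%N && (D %| x - m)%N].
Proof.
case/ex_minnP=> m Pm m_min.
have [|m' /andP[PmD ltmm'] m'_min] := ex_minnP (P := [pred x | P x && (m < x)%N]).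
  by exists (m + m)%N; rewrite /= P_add //; have := P_gt0 Pm; lia.
have D_gt0 : (0 < m' - m)%N by rewrite subn_gt0.
move: (m' - m)%N D_gt0 (subnKC (ltnW ltmm')) => D D_gt0 em'.
rewrite -em' in PmD m'_min.
have mD_min x : P x -> (m < x)%N -> (m + D <= x)%N.
  by move=> Px ltmx; apply: m'_min; rewrite /= Px.
have P_prog := add_closed_sub_progression D_gt0 m_min mD_min Pm PmD.
have dvdDm : (D %| m)%N by have /andP[_] := P_prog _ (P_add Pm Pm); rewrite addnK.
exists m, D; split=> //.
- rewrite ltnNge; apply/negP => le_Dmc.
  have PmD' : P (m - D)%N.
    apply: (P_sub PmD); last by have := P_ge Pm; lia.
    by rewrite (_ : m + D + (m - D) = m + m)%N ?P_add //; lia.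
  by have := m_min _ PmD'; lia.
- move=> x; apply/idP/idP; first exact: P_prog.
  by case/andP=> lemx /dvdnP[j ejx]; rewrite -(subnKC lemx) ejx
       progression_sub_add_closed.
Qed.

End AddClosedSet.

Section HarmonicSequence.

Variables (F : fieldType) (c : nat) (g : nat -> F).
Hypothesis gM : forall a b, (c <= a)%N -> (c <= b)%N ->
  g a * g b = (g a + g b) * g (a + b)%N.

Lemma harmonic_add_neq0 a b : (c <= a)%N -> (c <= b)%N ->
  g a != 0 -> g b != 0 -> g (a + b)%N != 0.
Proof.
move=> ca cb ga gb; apply: contra_neq (mulf_neq0 ga gb) => gab0.
by rewrite gM // gab0 mulr0.
Qed.

Lemma harmonic_sub_neq0 a b : (c <= a)%N -> (c <= b)%N ->
  g a != 0 -> g (a + b)%N != 0 -> g b != 0.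
Proof.
move=> ca cb ga gab; apply: contra_neq (mulf_neq0 ga gab) => gb0.
by have := gM ca cb; rewrite gb0 mulr0 addr0.
Qed.

Lemma harmonic_neq0_gt0 a : (c <= a)%N -> g a != 0 -> (0 < a)%N.
Proof.
case: a => // c0 g0; have := gM c0 c0.
rewrite -[LHS]addr0 mulrDl => /addrI /eqP.
by rewrite eq_sym mulf_eq0 orbb (negbTE g0).
Qed.

Lemma harmonic_mulSn a n : (c <= a)%N -> g a != 0 ->
  g (n.+1 * a)%N * n.+1%:R = g a.
Proof.
move=> ca ga; elim: n => [|n IH]; first by rewrite mul1n mulr1.
have cb : (c <= n.+1 * a)%N by apply: leq_trans ca (leq_pmull _ _).
have gb : g (n.+1 * a)%N != 0.
  by move: ga; rewrite -IH mulf_eq0 negb_or => /andP[].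
have := gM cb ca; rewrite -IH => E.
rewrite mulSnr; apply: (mulfI gb).
by rewrite E -natr1; ring.
Qed.

Lemma harmonic_weighted_eq a b : (c <= a)%N -> (c <= b)%N ->
  g a != 0 -> g b != 0 -> g a * a%:R = g b * b%:R.
Proof.
move=> ca cb ga gb.
have a_gt0 := harmonic_neq0_gt0 ca ga; have b_gt0 := harmonic_neq0_gt0 cb gb.
rewrite -(harmonic_mulSn b.-1 ca ga) -(harmonic_mulSn a.-1 cb gb).
by rewrite !prednK // mulnC -!mulrA (mulrC b%:R).
Qed.

Lemma harmonic_eq_div a b : [pchar F] =i pred0 -> (c <= a)%N -> (c <= b)%N ->
  g a != 0 -> g b != 0 -> g b = a%:R * g a / b%:R.
Proof.
move=> /pcharf0P charF0 ca cb ga gb.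
have b_neq0 : b%:R != 0 :> F by rewrite charF0 -lt0n (harmonic_neq0_gt0 cb gb).
by rewrite (mulrC a%:R) (harmonic_weighted_eq ca cb ga gb) mulfK.
Qed.

Lemma harmonic_support_cases :
  (forall a, (c <= a)%N -> g a = 0) \/
  exists m D, [/\ (0 < D)%N, (D %| m)%N, (m - c < D)%N &
    forall x, (c <= x)%N && (g x != 0) = (m <= x)%N && (D %| x - m)%N].
Proof.
pose A := [pred a | (c <= a)%N && (g a != 0)].
have [[a /andP[ca ga]] | noA] := classic (exists a, A a); last first.
  left=> a ca; apply/eqP/negPn/negP => ga.
  by apply: noA; exists a; rewrite inE ca.
right; apply: (@add_closed_eq_progression A c).
- by move=> x /andP[].
- by move=> x /andP[]; apply: harmonic_neq0_gt0.
- move=> x y /andP[cx gx] /andP[cy gy].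
  by rewrite inE harmonic_add_neq0 // andbT; lia.
- by move=> x y /andP[cx gx] /andP[_ gxy] cy; rewrite inE cy (harmonic_sub_neq0 cx).
- by exists a; rewrite inE ca.
Qed.

End HarmonicSequence.

Lemma shifted_harmonic (F : fieldType) (d tau : nat) (beta : nat -> F) :
  (forall s t, (tau <= s)%N -> (tau <= t)%N ->
     beta s * beta t = (beta s + beta t) * beta (s + t + d)%N) ->
  forall a b, (tau + d <= a)%N -> (tau + d <= b)%N ->
    beta (a - d)%N * beta (b - d)%N
    = (beta (a - d)%N + beta (b - d)%N) * beta (a + b - d)%N.
Proof.
move=> hbeta a b ha hb; rewrite hbeta; try lia.
by congr (_ * beta _); lia.
Qed.

Theorem lemma2p3 (F : fieldType) (hF : [pchar F] =i pred0)
  (d tau : nat) (beta : nat -> F)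
  (hbeta : forall s t : nat, (tau <= s)%N -> (tau <= t)%N ->
     beta s * beta t = (beta s + beta t) * beta (s + t + d)%N) :
  ((forall i : nat, (tau <= i)%N -> beta i = 0) \/
   (exists k Delta : nat,
      [/\ beta k != 0, (tau <= k)%N, (k - tau < Delta)%N, (Delta <= k + d)%N
        & (Delta %| k + d)%N] /\
      forall t : nat, (tau <= t)%N ->
        beta t = if (k <= t)%N && (Delta %| t - k)%N
                 then (k + d)%:R * beta k / (k + d + Delta * ((t - k) %/ Delta))%:R
                 else 0))
  /\ (d = 0%N -> tau = 0%N -> forall i : nat, beta i = 0).
Proof.
pose g a := beta (a - d)%N.
have gM : forall a b, (tau + d <= a)%N -> (tau + d <= b)%N ->
    g a * g b = (g a + g b) * g (a + b)%N := shifted_harmonic hbeta.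
have g_beta t : g (t + d)%N = beta t by rewrite /g addnK.
case: (harmonic_support_cases gM) => [g0 | [m [D [D_gt0 dvdDm ltmD suppE]]]].
  split=> [|_ tau0 i]; [left=> i hi|]; rewrite -g_beta g0 //; lia.
have /andP[cm gm] : (tau + d <= m)%N && (g m != 0) by rewrite suppE leqnn subnn dvdn0.
have m_gt0 := harmonic_neq0_gt0 gM cm gm.
have leDm := dvdn_leq m_gt0 dvdDm.
split=> [|d0 tau0]; last by lia.
right; exists (m - d)%N, D; rewrite subnK ?(leq_trans (leq_addl _ _) cm) //.
split=> [|t ht]; first by split=> //; lia.
have -> : ((m - d <= t)%N && (D %| t - (m - d))%N) = (g (t + d)%N != 0).
  rewrite -[RHS]andTb -ht -(leq_add2r d tau) suppE.
  by congr (_ && _); [apply/idP/idP; lia | congr (D %| _)%N; lia].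
rewrite g_beta; have [-> //|bt] := eqVneq (beta t) 0.
have /andP[le_mtd /dvdnP[j ej]] : (m <= t + d)%N && (D %| t + d - m)%N.
  by rewrite -suppE leq_add2r ht g_beta.
have ctd : (tau + d <= t + d)%N by rewrite leq_add2r.
have gtd : g (t + d)%N != 0 by rewrite g_beta.
rewrite -g_beta (harmonic_eq_div gM hF cm ctd gm gtd).
have -> : (t - (m - d) = t + d - m)%N by lia.
by rewrite ej mulnK // mulnC -ej subnKC.
Qed.
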